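(* $\frac{n^2}{12}+O(n)\le\mathrm{sat}_\circlearrowright(n,D_2)\le\frac{5n^2}{24}+O(n)$.
   Context: $\Omega_n=\{v_0,\dots,v_{n-1}\}$ with cyclic order $v_0<\dots<v_{n-1}<v_0$ (indices mod $n$). A $3$-cgh on $\Omega_n$ is a family of $3$-subsets of $\Omega_n$. For a $3$-cgh $F$, $H$ contains a copy of $F$ if there is an injection of the vertex set of $F$ into $\Omega_n$ preserving the cyclic order and mapping every edge of $F$ to an edge of $H$. $H$ is $F$-saturated if it contains no copy of $F$ but $H\cup\{e\}$ does for every $e\in\binom{\Omega_n}{3}\setminus H$; $\mathrm{sat}_\circlearrowright(n,F)$ is the minimum number of edges of an $F$-saturated $3$-cgh on $\Omega_n$. $D_2$ is the $3$-cgh on $\Omega_4$ with edges $\{v_0,v_1,v_2\}$ and $\{v_0,v_1,v_3\}$ (two triples sharing a pair whose remaining vertices lie on the same side of the chord through the shared pair). *)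

From mathcomp Require Import all_boot.
Set Implicit Arguments. Unset Strict Implicit. Unset Printing Implicit Defensive.

(* Vertex set Omega_n = 'I_n, with cyclic order 0 < 1 < ... < n-1 < 0. *)

Definition cyc (x y z : nat) : bool :=
  [|| (x < y < z), (y < z < x) | (z < x < y)]%N.

Definition is_cgh3 n (H : {set {set 'I_n}}) : bool :=
  [forall e in H, #|e| == 3].

Definition contains_copy k n (F : {set {set 'I_k}}) (H : {set {set 'I_n}}) : bool :=
  [exists phi : {ffun 'I_k -> 'I_n},
    [&& injectiveb phi,
        [forall a : 'I_k, forall b : 'I_k, forall c : 'I_k,
           cyc a b c == cyc (phi a) (phi b) (phi c)] &
        [forall e in F, phi @: e \in H]]].

Definition saturated k n (F : {set {set 'I_k}}) (H : {set {set 'I_n}}) : bool :=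
  [&& is_cgh3 H, ~~ contains_copy F H &
      [forall e : {set 'I_n}, ((#|e| == 3) && (e \notin H)) ==> contains_copy F (e |: H)]].

(* sat_cyc n F = minimum number of edges of an F-saturated 3-cgh on Omega_n.
   (The default value 'C(n,3) bounds the size of every 3-cgh, and
   F-saturated 3-cghs always exist, so this is the true minimum.) *)
Definition sat_cyc k n (F : {set {set 'I_k}}) : nat :=
  \big[minn/'C(n, 3)]_(H : {set {set 'I_n}} | saturated F H) #|H|.

Definition D2 : {set {set 'I_4}} :=
  [set [set (inord 0 : 'I_4); inord 1; inord 2];
       [set (inord 0 : 'I_4); inord 1; inord 3]].

(* Lower bound: the "shadow" of an edge {a,b,c} collects the triples sharing
   a side with it whose third vertex lies on the same side as that of the
   edge; it has at most 2n elements.  In a D2-saturated family every triple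
   lies in the shadow of an edge, so 'C(n,3) <= 2n |H|.

   Upper bound: the "ladder" of triangles with clockwise gaps g, g + 1,
   n - 2g - 1 (g odd, g < 2(n/6)) is D2-free, because in a ladder triangle
   each gap determines the next one.  Any saturated extension of the ladder
   only adds triangles with three gaps in (2(n/6), 2(n/6) + 3], at most 9n
   of them, so it has at most n(n/6) + 9n edges. *)

From mathcomp Require Import all_boot zify.

Set Implicit Arguments. Unset Strict Implicit. Unset Printing Implicit Defensive.

Definition gap (n u v : nat) : nat := if u <= v then v - u else n + v - u.

Lemma cyc_rot a b c : cyc a b c = cyc b c a.
Proof. rewrite /cyc; lia. Qed.

Lemma cyc_anti a b c : cyc a b c -> cyc a c b = false.
Proof. rewrite /cyc; lia. Qed.

Lemma cyc_xxy x y : cyc x x y = false. Proof. rewrite /cyc; lia. Qed.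
Lemma cyc_xyx x y : cyc x y x = false. Proof. rewrite /cyc; lia. Qed.
Lemma cyc_yxx x y : cyc y x x = false. Proof. rewrite /cyc; lia. Qed.

Lemma cyc_or a b c : a != b -> b != c -> c != a -> cyc a b c || cyc a c b.
Proof. rewrite /cyc; lia. Qed.

Lemma cyc_sides_le2 a b c w : cyc a b c -> cyc a b w + cyc b c w + cyc c a w <= 2.
Proof. rewrite /cyc; lia. Qed.

Lemma cyc_same_set p0 p1 p2 a b c :
  [|| p0 == a, p0 == b | p0 == c] -> [|| p1 == a, p1 == b | p1 == c] ->
  [|| p2 == a, p2 == b | p2 == c] -> cyc p0 p1 p2 -> cyc a b c ->
  (p0 = a /\ p1 = b /\ p2 = c) \/ (p0 = b /\ p1 = c /\ p2 = a) \/
    (p0 = c /\ p1 = a /\ p2 = b).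
Proof. rewrite /cyc; lia. Qed.

Section Gaps.

Variable n : nat.

Lemma cyc_gapP a b c : a < n -> b < n -> c < n ->
  cyc a b c = [&& a != b, b != c, c != a & gap n a b + gap n b c < n].
Proof.
move=> ha hb hc; rewrite /gap /cyc.
case: (leqP a b) => h1; case: (leqP b c) => h2; lia.
Qed.

Lemma cyc_gap_sum a b c : a < n -> b < n -> c < n -> cyc a b c ->
  gap n a b + gap n b c + gap n c a = n.
Proof.
move=> ha hb hc; rewrite /gap /cyc.
case: (leqP a b) => h1; case: (leqP b c) => h2; case: (leqP c a) => h3; lia.
Qed.

Lemma gap_sym a b : a < n -> b < n -> a != b -> gap n a b + gap n b a = n.
Proof. move=> ha hb; rewrite /gap; case: (leqP a b); case: (leqP b a); lia. Qed.

Lemma gap_bounds a b : a < n -> b < n -> a != b -> 0 < gap n a b < n.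
Proof. move=> ha hb; rewrite /gap; case: (leqP a b); lia. Qed.

Lemma gapxx x : gap n x x = 0.
Proof. by rewrite /gap leqnn subnn. Qed.

Lemma ord_gt0 (x : 'I_n) : 0 < n.
Proof. exact: leq_ltn_trans (leq0n x) (ltn_ord x). Qed.

Definition shift (x : 'I_n) (k : nat) : 'I_n :=
  Ordinal (ltn_pmod (x + k) (ord_gt0 x)).

Lemma gap_shift (x : 'I_n) k : k < n -> gap n x (shift x k) = k.
Proof.
move=> hk; have hx := ltn_ord x; rewrite /gap /=.
have [lt_xk|ge_xk] := ltnP (x + k) n.
  by rewrite modn_small //; case: leqP; lia.
have -> : (x + k) %% n = x + k - n.
  by rewrite -{1}(subnK ge_xk) modnDr modn_small //; lia.
case: leqP; lia.
Qed.

Lemma shift_gap (u v : 'I_n) : shift u (gap n u v) = v.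
Proof.
apply: val_inj => /=; rewrite /gap; have hu := ltn_ord u; have hv := ltn_ord v.
case: leqP => h; first by rewrite subnKC // modn_small.
have -> : u + (n + v - u) = n + v by lia.
by rewrite modnDl modn_small.
Qed.

End Gaps.

Section Triples.

Variable n : nat.
Implicit Types (a b c : 'I_n) (t : {set 'I_n}).

Lemma cyc_neq a b c : cyc a b c -> [/\ a != b, b != c & c != a].
Proof. rewrite /cyc => h; rewrite -!val_eqE /=; split; lia. Qed.

Lemma set3_swap a b c : [set a; b; c] = [set a; c; b].
Proof. by apply/setP => x; rewrite !inE orbAC. Qed.

Lemma set3_rot a b c : [set a; b; c] = [set b; c; a].
Proof. by apply/setP => x; rewrite !inE -orbA orbC. Qed.

Lemma card_set3 a b c : a != b -> b != c -> c != a -> #|[set a; b; c]| = 3.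
Proof.
move=> ab bc ca.
by rewrite setUC cardsU1 cards2 ab !inE negb_or (eq_sym c b) bc ca.
Qed.

Lemma set3P t : #|t| = 3 ->
  exists a b c, [/\ a != b, b != c, c != a & t = [set a; b; c]].
Proof.
move=> h; have /card_gt2P [a [b [c [[ta tb tc] [ab bc ca]]]]] : 2 < #|t| by rewrite h.
exists a, b, c; split => //; apply/eqP; rewrite eq_sym eqEcard card_set3 // h leqnn.
by rewrite andbT; apply/subsetP => x; rewrite !inE => /orP [/orP [] | ] /eqP ->.
Qed.

Lemma set3_cyc t : #|t| = 3 -> exists a b c, cyc a b c /\ t = [set a; b; c].
Proof.
case/set3P => a [b [c [ab bc ca ->]]].
have /orP [h|h] : cyc a b c || cyc a c b by apply: cyc_or; rewrite -?val_eqE.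
  by exists a, b, c.
by exists a, c, b; rewrite set3_swap.
Qed.

End Triples.

Lemma contains_copyS k n (F : {set {set 'I_k}}) (H H' : {set {set 'I_n}}) :
  H \subset H' -> contains_copy F H -> contains_copy F H'.
Proof.
move=> /subsetP sub /existsP [phi /and3P [i c /forallP e]].
apply/existsP; exists phi; rewrite i c /=; apply/forallP => x.
by apply/implyP => /(implyP (e x)) /sub.
Qed.

Section D2Copies.

Variables (n : nat) (H : {set {set 'I_n}}).

Definition D2_pattern (p0 p1 p2 p3 : 'I_n) : Prop :=
  [/\ cyc p0 p1 p2, cyc p0 p1 p3, p2 != p3,
      [set p0; p1; p2] \in H & [set p0; p1; p3] \in H].

Lemma D2_copy_pattern : contains_copy D2 H ->
  exists p0 p1 p2 p3, D2_pattern p0 p1 p2 p3.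
Proof.
case/existsP => phi /and3P [/injectiveP inj /forallP hc /forallP he].
exists (phi (inord 0)), (phi (inord 1)), (phi (inord 2)), (phi (inord 3)).
have phi_cyc i j k : i < 4 -> j < 4 -> k < 4 -> cyc i j k ->
    cyc (phi (inord i)) (phi (inord j)) (phi (inord k)).
  move=> hi hj hk h.
  move: (hc (inord i)) => /forallP /(_ (inord j)) /forallP /(_ (inord k)) /eqP <-.
  by rewrite !inordK.
have phi_edge e : e \in D2 -> phi @: e \in H by move=> /(implyP (he e)).
split; [exact: phi_cyc | exact: phi_cyc | | |].
- by apply/eqP => /inj /(congr1 val); rewrite /= !inordK.
- by have := phi_edge _ (setU11 _ _); rewrite !imsetU !imset_set1.
- by have := phi_edge _ (setU1r _ (set11 _)); rewrite !imsetU !imset_set1.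
Qed.

Lemma pattern4_D2_copy (p0 p1 p2 p3 : 'I_n) :
  cyc p0 p1 p2 -> cyc p0 p2 p3 ->
  [set p0; p1; p2] \in H -> [set p0; p1; p3] \in H -> contains_copy D2 H.
Proof.
move=> c012 c023 e2 e3; move: (c012) (c023); rewrite /cyc => h1 h2.
apply/existsP; exists [ffun i : 'I_4 => nth p0 [:: p0; p1; p2; p3] i].
apply/and3P; split.
- apply/injectiveP => i j; rewrite !ffunE => /(congr1 val) e; apply: val_inj.
  by case: i j e => [[|[|[|[|i]]]] hi] // [[|[|[|[|j]]]] hj] //=; lia.
- apply/forallP => i; apply/forallP => j; apply/forallP => k; rewrite !ffunE.
  case: i => [[|[|[|[|i]]]] hi] //; case: j => [[|[|[|[|j]]]] hj] //;
  case: k => [[|[|[|[|k]]]] hk] //; apply/eqP; rewrite /cyc /=; lia.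
- apply/forallP => e; apply/implyP; rewrite /D2 !inE => /orP [] /eqP ->;
  by rewrite !imsetU !imset_set1 !ffunE !inordK.
Qed.

Lemma pattern_D2_copy p0 p1 p2 p3 : D2_pattern p0 p1 p2 p3 -> contains_copy D2 H.
Proof.
case=> c012 c013 d23 e2 e3.
have [c023|c032] : cyc p0 p2 p3 \/ cyc p0 p3 p2.
  by move: c012 c013 d23; rewrite -val_eqE /cyc /=; lia.
  exact: (pattern4_D2_copy c012 c023 e2 e3).
exact: (pattern4_D2_copy c013 c032 e3 e2).
Qed.

Lemma D2_copyP : contains_copy D2 H <-> exists p0 p1 p2 p3, D2_pattern p0 p1 p2 p3.
Proof.
split; first exact: D2_copy_pattern.
by case=> [p0 [p1 [p2 [p3 /pattern_D2_copy]]]].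
Qed.

End D2Copies.

Lemma bigmin_le (I : eqType) (r : seq I) (P : pred I) (F : I -> nat) x0 i :
  i \in r -> P i -> \big[minn/x0]_(j <- r | P j) F j <= F i.
Proof.
elim: r => // j r IH; rewrite inE big_cons => /orP [/eqP <- -> | ir Pi].
  exact: geq_minl.
by case: ifP => _; rewrite ?geq_min IH ?orbT.
Qed.

Section Saturation.

Variables (k n : nat) (F : {set {set 'I_k}}).

(* Every F-free 3-cgh extends to an F-saturated one: take a largest F-free
   3-cgh containing it. *)
Lemma saturated_extension (H0 : {set {set 'I_n}}) :
  is_cgh3 H0 -> ~~ contains_copy F H0 -> exists2 H, saturated F H & H0 \subset H.
Proof.
move=> cgh0 free0.
pose P (H : {set {set 'I_n}}) := [&& is_cgh3 H, ~~ contains_copy F H & H0 \subset H].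
have P0 : P H0 by rewrite /P cgh0 free0 subxx.
case: (@arg_maxnP _ H0 P (fun H => #|H|) P0) => H /and3P [cgh free sub] maxH.
exists H => //; rewrite /saturated cgh free /=.
apply/forallP => e; apply/implyP => /andP [e3 eH]; apply: contraT => free_e.
have : P (e |: H).
  rewrite /P free_e (subset_trans sub (subsetUr _ _)) !andbT.
  apply/forallP => x; apply/implyP; rewrite in_setU1 => /orP [/eqP -> //|xH].
  by move/forallP: cgh => /(_ x); rewrite xH.
by move/maxH; rewrite cardsU1 eH add1n /= ltnn.
Qed.

Lemma sat_cyc_le (H : {set {set 'I_n}}) : saturated F H -> sat_cyc n F <= #|H|.
Proof.
by move=> satH; apply: bigmin_le; rewrite ?mem_index_enum.
Qed.

Lemma sat_cyc_ge c m : m <= c * 'C(n, 3) ->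
  (forall H : {set {set 'I_n}}, saturated F H -> m <= c * #|H|) ->
  m <= c * sat_cyc n F.
Proof.
move=> hdef hsat; rewrite /sat_cyc.
apply: (big_ind (fun x => m <= c * x)) => // x y hx hy.
by rewrite /minn; case: ifP.
Qed.

End Saturation.

Lemma card_bigcup_le (I T : finType) (A : {pred I}) (F : I -> {set T}) :
  #|\bigcup_(i in A) F i| <= \sum_(i in A) #|F i|.
Proof.
elim/big_rec2: _ => [|i B s _ IH]; first by rewrite cards0.
by rewrite (leq_trans (leq_card_setU _ _)) // leq_add2l.
Qed.

Section Shadows.

Variable n : nat.
Implicit Types (a b c x y z w : 'I_n) (f t : {set 'I_n}).

Lemma sum_set3 a b c (F : 'I_n -> nat) : a != b -> b != c -> c != a ->
  \sum_(x in [set a; b; c]) F x = F a + F b + F c.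
Proof.
move=> ab bc ca; rewrite setUC big_setU1 ?big_setU1 ?big_set1 /=; first by lia.
  by rewrite !inE.
by rewrite !inE negb_or ca eq_sym bc.
Qed.

Definition side x y : {set {set 'I_n}} :=
  [set [set x; y; w] | w in [set w : 'I_n | cyc x y w]].

(* Adding such a triple next to f creates a copy of D2. *)
Definition shadow f : {set {set 'I_n}} :=
  \bigcup_(x in f) \bigcup_(y in f) \bigcup_(z in f | cyc x y z) side x y.

Lemma in_shadow f x y z w : x \in f -> y \in f -> z \in f ->
  cyc x y z -> cyc x y w -> [set x; y; w] \in shadow f.
Proof.
move=> xf yf zf cxyz cxyw.
apply/bigcupP; exists x => //; apply/bigcupP; exists y => //.
apply/bigcupP; exists z; first by rewrite zf.
by apply/imsetP; exists w; rewrite ?inE.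
Qed.

Lemma card_side x y : #|side x y| <= \sum_(w : 'I_n) cyc x y w.
Proof.
apply: (leq_trans (leq_imset_card _ _)).
by rewrite -sum1_card big_mkcond /=; apply: leq_sum => w _; rewrite inE; case: cyc.
Qed.

Lemma sum_sides a b c (F : 'I_n -> 'I_n -> nat) : cyc a b c ->
  \sum_(x in [set a; b; c]) \sum_(y in [set a; b; c])
     \sum_(z in [set a; b; c] | cyc x y z) F x y = F a b + F b c + F c a.
Proof.
move=> cabc; have [ab bc ca] := cyc_neq cabc.
have cbca : cyc b c a by rewrite -cyc_rot.
have ccab : cyc c a b by rewrite -cyc_rot.
under eq_bigr => x _ do under eq_bigr => y _ do rewrite big_mkcondr sum_set3 //.
rewrite !sum_set3 // cabc cbca ccab !cyc_xxy !cyc_xyx !cyc_yxx.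
by rewrite (cyc_anti cabc) (cyc_anti cbca) (cyc_anti ccab) !addn0 !add0n addnAC.
Qed.

(* Each edge has a shadow of size at most 2n: a vertex w lies beyond at most
   two of the three sides of the edge. *)
Lemma card_shadow f : #|f| = 3 -> #|shadow f| <= 2 * n.
Proof.
case/set3_cyc => a [b [c [cabc ->]]].
apply: (@leq_trans (\sum_(x in [set a; b; c]) \sum_(y in [set a; b; c])
    \sum_(z in [set a; b; c] | cyc x y z) \sum_(w : 'I_n) cyc x y w)).
  apply: (leq_trans (card_bigcup_le _ _)); apply: leq_sum => x _.
  apply: (leq_trans (card_bigcup_le _ _)); apply: leq_sum => y _.
  apply: (leq_trans (card_bigcup_le _ _)); apply: leq_sum => z _.
  exact: card_side.
rewrite sum_sides // -!big_split /=.
apply: (@leq_trans (\sum_(w : 'I_n) 2)); first by apply: leq_sum => w _; apply: cyc_sides_le2.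
by rewrite sum_nat_const card_ord mulnC.
Qed.

(* In a D2-saturated family every triple lies in the shadow of some edge:
   either it is itself an edge, or adding it creates a copy of D2 whose
   other edge casts the shadow. *)
Lemma saturated_shadow_cover (H : {set {set 'I_n}}) t :
  saturated D2 H -> #|t| = 3 -> exists2 f, f \in H & t \in shadow f.
Proof.
case/and3P => _ free /forallP sat ht.
have [tH|tH] := boolP (t \in H).
  exists t => //; have [a [b [c [cabc tE]]]] := set3_cyc ht.
  by rewrite tE; apply: (in_shadow (z := c)); rewrite // !inE eqxx ?orbT.
have := sat t; rewrite ht tH /= => /D2_copyP [p0 [p1 [p2 [p3 [c2 c3 d23 e2 e3]]]]].
have shadow2 : [set p0; p1; p2] \in shadow [set p0; p1; p3].
  by apply: (in_shadow (z := p3)); rewrite // !inE eqxx ?orbT.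
have shadow3 : [set p0; p1; p3] \in shadow [set p0; p1; p2].
  by apply: (in_shadow (z := p2)); rewrite // !inE eqxx ?orbT.
move: e2 e3; rewrite !in_setU1 => /orP [/eqP e2 | e2] /orP [/eqP e3 | e3].
- have : p3 \in [set p0; p1; p2] by rewrite e2 -e3 !inE eqxx orbT.
  by move: c2 c3 d23; rewrite !inE -!val_eqE /cyc /=; lia.
- by exists [set p0; p1; p3]; rewrite // -e2.
- by exists [set p0; p1; p2]; rewrite // -e3.
- by case/negP: free; apply/D2_copyP; exists p0, p1, p2, p3.
Qed.

End Shadows.

(* Lower bound: the shadows of the edges of a D2-saturated family cover all
   'C(n, 3) triples, so the family has at least 'C(n, 3) / (2n) edges. *)
Lemma D2_saturated_shadows n (H : {set {set 'I_n}}) :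
  saturated D2 H -> 'C(n, 3) <= #|H| * (2 * n).
Proof.
move=> satH; have /forallP cgh : is_cgh3 H by case/and3P: satH.
rewrite -[n in 'C(n, _)]card_ord -card_draws.
apply: (@leq_trans #|\bigcup_(f in H) shadow f|).
  apply/subset_leq_card/subsetP => t; rewrite inE => /eqP ht.
  by have [f fH tf] := saturated_shadow_cover satH ht; apply/bigcupP; exists f.
apply: (leq_trans (card_bigcup_le _ _)); rewrite -sum_nat_const leq_sum // => f fH.
by apply: card_shadow; apply/eqP; move: (cgh f); rewrite fH.
Qed.

Lemma binom3 n : 'C(n, 3) * 6 = n * (n - 1) * (n - 2).
Proof.
have := bin_ffact n 3; rewrite !ffactnS ffactn0 /= => ->.
by rewrite -!subn1 -subnDA muln1 mulnA.
Qed.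

Lemma D2_saturated_lower n (H : {set {set 'I_n}}) :
  saturated D2 H -> (n - 1) * (n - 2) <= 12 * #|H|.
Proof.
move=> /D2_saturated_shadows; move: #|H| => h bound; have binom := binom3 n.
have [->|n_gt0] := posnP n; first by [].
by rewrite -(leq_pmul2l n_gt0); nia.
Qed.

Section Ladder.

Variable n : nat.
Implicit Types (a b c w : 'I_n) (t : {set 'I_n}).

(* Sides of length at most short_bound are "short"; three short sides
   cannot fill the cycle, while three sides longer than short_bound + 3
   would overfill it. *)
Definition short_bound : nat := 2 * (n %/ 6).

Lemma short_bound_facts : 3 * short_bound <= n < 3 * short_bound + 6.
Proof. rewrite /short_bound; lia. Qed.

Definition ladder_gaps (g1 g2 : nat) : bool :=
  [&& g1 %% 2 == 1, g1 < short_bound & g2 == g1.+1].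

Definition ladder : {set {set 'I_n}} :=
  [set t | [exists a : 'I_n, exists b : 'I_n, exists c : 'I_n,
     [&& t == [set a; b; c], cyc a b c & ladder_gaps (gap n a b) (gap n b c)]]].

Lemma in_ladder a b c : cyc a b c -> ladder_gaps (gap n a b) (gap n b c) ->
  [set a; b; c] \in ladder.
Proof.
by move=> cabc hg; rewrite inE; apply/existsP; exists a; apply/existsP; exists b;
  apply/existsP; exists c; rewrite eqxx cabc.
Qed.

(* Going around a ladder triangle, each gap determines the next one: an odd
   short gap g is followed by g + 1, an even short gap g by n + 1 - 2g, and
   the long gap n - 2g - 1 by g. *)
Definition next_gap (g : nat) : nat :=
  if (g %% 2 == 1) && (g < short_bound) then g.+1
  else if g <= short_bound then n.+1 - 2 * g else (n - g - 1) %/ 2.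

Lemma ladder_next_gap (p0 p1 p2 : 'I_n) : cyc p0 p1 p2 -> [set p0; p1; p2] \in ladder ->
  gap n p1 p2 = next_gap (gap n p0 p1).
Proof.
move=> c012; rewrite inE => /existsP [a /existsP [b /existsP [c /and3P [/eqP e cabc hg]]]].
have mem p : p \in [set p0; p1; p2] -> [|| val p == val a, val p == val b | val p == val c].
  by rewrite e !inE -!val_eqE orbA.
have [m0 m1 m2] : [/\ p0 \in [set p0; p1; p2], p1 \in [set p0; p1; p2]
                    & p2 \in [set p0; p1; p2]] by rewrite !inE !eqxx !orbT.
have := cyc_gap_sum (ltn_ord a) (ltn_ord b) (ltn_ord c) cabc.
have := short_bound_facts; move: hg; rewrite /ladder_gaps /next_gap => hg bnd sum.
have [[/val_inj -> [/val_inj -> /val_inj ->]] | [[/val_inj -> [/val_inj -> /val_inj ->]] |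
      [/val_inj -> [/val_inj -> /val_inj ->]]]] :=
  cyc_same_set (mem _ m0) (mem _ m1) (mem _ m2) c012 cabc;
  case: ifP => h1; try case: ifP => h2; lia.
Qed.

(* Hence two ladder triangles on the same pair p0 p1 on the same side
   coincide, and the ladder contains no copy of D2. *)
Lemma ladder_D2_free : ~~ contains_copy D2 ladder.
Proof.
apply/negP => /D2_copyP [p0 [p1 [p2 [p3 [c2 c3 d23 e2 e3]]]]].
move: d23; rewrite -(shift_gap p1 p2) -(shift_gap p1 p3).
by rewrite (ladder_next_gap c2 e2) (ladder_next_gap c3 e3) eqxx.
Qed.

Lemma ladder_cgh3 : is_cgh3 ladder.
Proof.
apply/forallP => t; apply/implyP.
rewrite inE => /existsP [a /existsP [b /existsP [c /and3P [/eqP -> cabc _]]]].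
by have [ab bc ca] := cyc_neq cabc; rewrite card_set3.
Qed.

Definition ladder_triangle (p : 'I_n * 'I_(n %/ 6)) : {set 'I_n} :=
  let b := shift p.1 (2 * p.2 + 1) in [set p.1; b; shift b (2 * p.2 + 2)].

Lemma card_ladder : #|ladder| <= n * (n %/ 6).
Proof.
apply: (@leq_trans #|ladder_triangle @: [set: 'I_n * 'I_(n %/ 6)]|); last first.
  by apply: (leq_trans (leq_imset_card _ _)); rewrite cardsT card_prod !card_ord.
apply/subset_leq_card/subsetP => t.
rewrite inE => /existsP [a /existsP [b /existsP [c /and3P [/eqP -> cabc hg]]]].
move: hg; rewrite /ladder_gaps /short_bound => /and3P [/eqP g1 g2 /eqP g3].
have k : gap n a b %/ 2 < n %/ 6 by lia.
apply/imsetP; exists (a, Ordinal k); rewrite ?inE //= /ladder_triangle /=.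
have -> : 2 * (gap n a b %/ 2) + 1 = gap n a b by lia.
have -> : 2 * (gap n a b %/ 2) + 2 = gap n b c by lia.
by rewrite !shift_gap.
Qed.

(* Every pair a b at clockwise distance g <= short_bound lies in a ladder
   triangle whose third vertex w lies clockwise after b: for odd g take the
   gaps g, g + 1 from a, for even g the gaps g - 1, g ending at b. *)
Lemma ladder_short_pair a b : a != b -> gap n a b <= short_bound ->
  exists2 w : 'I_n, cyc a b w & [set a; b; w] \in ladder.
Proof.
move=> ab; rewrite /short_bound => short.
have ha := ltn_ord a; have hb := ltn_ord b.
have sym_ab := gap_sym ha hb ab; have pos_ab := gap_bounds ha hb ab.
have [odd_g|even_g] := boolP (gap n a b %% 2 == 1).
- pose w := shift b (gap n a b).+1; have hw := ltn_ord w.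
  have gap_bw : gap n b w = (gap n a b).+1 by rewrite gap_shift //; lia.
  have bw : (b : nat) != w by apply/eqP => e; move: gap_bw; rewrite -e gapxx.
  have wa : (w : nat) != a by apply/eqP => e; move: gap_bw; rewrite e; lia.
  have cabw : cyc a b w by rewrite (cyc_gapP ha hb hw) ab bw wa gap_bw /=; lia.
  exists w => //; apply: in_ladder => //.
  by rewrite /ladder_gaps gap_bw odd_g eqxx andbT /short_bound; lia.
- pose w := shift a (n - (gap n a b).-1); have hw := ltn_ord w.
  have gap_aw : gap n a w = n - (gap n a b).-1 by rewrite gap_shift //; lia.
  have aw : (a : nat) != w by apply/eqP => e; move: gap_aw; rewrite -e gapxx; lia.
  have gap_wa : gap n w a = (gap n a b).-1 by have := gap_sym ha hw aw; lia.
  have bw : (b : nat) != w by apply/eqP => e; move: gap_aw; rewrite -e; lia.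
  have cwab : cyc w a b by rewrite (cyc_gapP hw ha hb) eq_sym aw ab bw gap_wa /=; lia.
  exists w; first by rewrite -(cyc_rot w).
  rewrite -(set3_rot w); apply: in_ladder => //; rewrite /ladder_gaps gap_wa.
  by rewrite /short_bound; lia.
Qed.

End Ladder.

Section UpperBound.

Variable n : nat.

(* In a D2-free family containing the ladder, an edge with a side of length
   at most short_bound must itself be a ladder triangle: otherwise the ladder
   triangle on that side (ladder_short_pair) forms a copy of D2 with it. *)
Lemma short_side_in_ladder (H : {set {set 'I_n}}) (a b c : 'I_n) :
  ladder n \subset H -> ~~ contains_copy D2 H -> cyc a b c ->
  [set a; b; c] \in H -> gap n a b <= short_bound n -> [set a; b; c] \in ladder n.
Proof.
move=> /subsetP sub free cabc eH short; have [ab _ _] := cyc_neq cabc.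
have [w cabw ew] := ladder_short_pair ab short.
apply: contraNT free => notL; apply/D2_copyP; exists a, b, c, w; split => //.
- by apply: contraNneq notL => ->.
- exact: sub.
Qed.

Definition long_triangle (p : 'I_n * 'I_3 * 'I_3) : {set 'I_n} :=
  let b := shift p.1.1 (short_bound n + 1 + p.1.2) in
  [set p.1.1; b; shift b (short_bound n + 1 + p.2)].

Lemma card_long_triangles : #|long_triangle @: [set: 'I_n * 'I_3 * 'I_3]| <= 9 * n.
Proof.
apply: (leq_trans (leq_imset_card _ _)).
by rewrite cardsT !card_prod !card_ord -mulnA mulnC.
Qed.

(* Hence every other edge has three long sides, whose lengths add up to
   n < 3 * short_bound + 6. *)
Lemma edge_outside_ladder (H : {set {set 'I_n}}) t :
  ladder n \subset H -> ~~ contains_copy D2 H -> t \in H -> #|t| = 3 ->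
  t \notin ladder n -> t \in long_triangle @: [set: 'I_n * 'I_3 * 'I_3].
Proof.
move=> sub free tH /set3_cyc [a [b [c [cabc tE]]]] notL; rewrite {}tE in tH notL *.
have bnd := short_bound_facts n.
have := cyc_gap_sum (ltn_ord a) (ltn_ord b) (ltn_ord c) cabc.
have cbca : cyc b c a by rewrite -cyc_rot.
have ccab : cyc c a b by rewrite -cyc_rot.
have long (x y z : 'I_n) : cyc x y z -> [set x; y; z] = [set a; b; c] ->
    short_bound n < gap n x y.
  move=> cxyz e; rewrite ltnNge; apply: contra notL => short.
  by rewrite -e (short_side_in_ladder sub free cxyz) ?e.
have := long _ _ _ cabc erefl.
have := long _ _ _ cbca (esym (set3_rot a b c)).
have := long _ _ _ ccab (set3_rot c a b) => gca gbc gab sum.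
have i1 : gap n a b - short_bound n - 1 < 3 by lia.
have i2 : gap n b c - short_bound n - 1 < 3 by lia.
apply/imsetP; exists (a, Ordinal i1, Ordinal i2); rewrite ?inE //= /long_triangle /=.
have -> : short_bound n + 1 + (gap n a b - short_bound n - 1) = gap n a b by lia.
have -> : short_bound n + 1 + (gap n b c - short_bound n - 1) = gap n b c by lia.
by rewrite !shift_gap.
Qed.

(* Upper bound: a saturated extension of the ladder consists of the ladder
   and at most 9n long triangles. *)
Lemma D2_saturated_upper :
  exists2 H : {set {set 'I_n}}, saturated D2 H & #|H| <= n * (n %/ 6) + 9 * n.
Proof.
have [H satH sub] := saturated_extension (ladder_cgh3 n) (ladder_D2_free n).
exists H => //; case/and3P: satH => /forallP cgh free _.
apply: (@leq_trans #|ladder n :|: long_triangle @: [set: 'I_n * 'I_3 * 'I_3]|).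
  apply/subset_leq_card/subsetP => t tH; rewrite in_setU -implyNb.
  apply/implyP => notL; apply: (edge_outside_ladder sub free tH _ notL).
  by move: (cgh t); rewrite tH => /eqP.
apply: (leq_trans (leq_card_setU _ _)).
exact: leq_add (card_ladder n) card_long_triangles.
Qed.

End UpperBound.

Theorem propositionA7 :
  exists (C N : nat), forall n : nat, (N <= n)%N ->
    (n ^ 2 <= 12 * sat_cyc n D2 + C * n)%N /\
    (24 * sat_cyc n D2 <= 5 * n ^ 2 + C * n)%N.
Proof.
exists 216, 12 => n n_ge12; split.
- have default : (n - 1) * (n - 2) <= 12 * 'C(n, 3) by have := binom3 n; nia.
  have := sat_cyc_ge default (@D2_saturated_lower n); nia.
- have [H satH size_H] := D2_saturated_upper n.
  have := sat_cyc_le satH; have := leq_divM n 6; nia.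
Qed.
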